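(* For any finite family $\{(\sigma_{i,A},\sigma_{i,B})\;\vert\; i\in I\}\subseteq\mathfrak{S}_A\times\mathfrak{S}_B$ and any $(\sigma'_A,\sigma'_B)\in\mathfrak{S}_A\times\mathfrak{S}_B$, $$\Big(\inf^{S_{AB}}_{i\in I}\sigma_{i,A}\otimes\sigma_{i,B}\Big)\sqsubseteq_{S_{AB}}\sigma'_A\otimes\sigma'_B\ \Rightarrow\ \Big(\inf^{\widetilde{S}_{AB}}_{i\in I}\sigma_{i,A}\widetilde{\otimes}\sigma_{i,B}\Big)\sqsubseteq_{\widetilde{S}_{AB}}\sigma'_A\widetilde{\otimes}\sigma'_B.$$
   Context: $\mathfrak{S}_A,\mathfrak{S}_B$ are down-complete Inf semi-lattices with bottom, carriers of States/Effects Chu spaces $(\mathfrak{S}_A,\mathfrak{E}_A,\epsilon^{\mathfrak{S}_A})$, $(\mathfrak{S}_B,\mathfrak{E}_B,\epsilon^{\mathfrak{S}_B})$ with values in $\mathfrak{B}=\{\mathbf{Y},\mathbf{N},\bot\}$ (meet $\wedge$, product $\bullet$ with $x\bullet\mathbf{Y}=x$, $x\bullet\mathbf{N}=\mathbf{N}$, $\bot\bullet\bot=\bot$). $S_{AB}=\mathfrak{S}_A\otimes\mathfrak{S}_B$ is Fraser's canonical tensor product: the Inf semi-lattice generated by elements $\sigma_A\otimes\sigma_B$ subject to $(\sigma_A\sqcap\sigma'_A)\otimes\sigma_B=(\sigma_A\otimes\sigma_B)\sqcap(\sigma'_A\otimes\sigma_B)$ and $\sigma_A\otimes(\sigma_B\sqcap\sigma'_B)=(\sigma_A\otimes\sigma_B)\sqcap(\sigma_A\otimes\sigma'_B)$,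 ordered by $x\sqsubseteq y$ iff $x\sqcap y=x$. $\widetilde{S}_{AB}$ is the minimal tensor product: maps $\inf^{\widetilde{S}_{AB}}_{i\in I}\sigma_{i,A}\widetilde{\otimes}\sigma_{i,B}:(\mathfrak{l}_A,\mathfrak{l}_B)\mapsto\bigwedge_{i\in I}\epsilon^{\mathfrak{S}_A}_{\mathfrak{l}_A}(\sigma_{i,A})\bullet\epsilon^{\mathfrak{S}_B}_{\mathfrak{l}_B}(\sigma_{i,B})$ on $\mathfrak{E}_A\times\mathfrak{E}_B$, ordered pointwise. *)

From HB Require Import structures.
From mathcomp Require Import all_boot all_order.
Set Implicit Arguments. Unset Strict Implicit. Unset Printing Implicit Defensive.
Import Order.TTheory.
Local Open Scope order_scope.

Inductive B3 : Type := BY | BN | Bbot.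

Definition bmeet (x y : B3) : B3 :=
  match x, y with
  | BY, BY => BY
  | BN, BN => BN
  | _, _ => Bbot
  end.

Definition bprod (x y : B3) : B3 :=
  match x, y with
  | _, BY => x
  | _, BN => BN
  | BY, Bbot => Bbot
  | BN, Bbot => BN
  | Bbot, Bbot => Bbot
  end.

Definition ble (x y : B3) : Prop := bmeet x y = x.

Definition down_complete (d : Order.disp_t) (S : bMeetSemilatticeType d) : Prop :=
  forall X : S -> Prop,
    (exists x, X x) ->
    (forall x y, X x -> X y -> exists z, X z /\ z <= x /\ z <= y) ->
    exists m : S, (forall x, X x -> m <= x) /\
                  (forall m', (forall x, X x -> m' <= x) -> m' <= m).

(* States/Effects Chu space with carrier S of states, effects E and
   evaluation eps : E -> S -> B3; the evaluation maps eps_l are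
   Inf-semilattice morphisms (preserve binary meets). *)
Record ChuSpace (d : Order.disp_t) (S : bMeetSemilatticeType d) := {
  effects : Type;
  eval : effects -> S -> B3;
  eval_meet : forall l (s s' : S), eval l (s `&` s') = bmeet (eval l s) (eval l s')
}.

(* Formal finite infima of pure tensors a (x) b are represented by
   (nonempty) sequences of pairs; concatenation is the formal meet.
   teq is the congruence generated by the semilattice laws (formal meets are
   sets of generators) and the two bilinearity relations. *)
Section Fraser.
Variables (dA dB : Order.disp_t) (SA : bMeetSemilatticeType dA)
          (SB : bMeetSemilatticeType dB).

Inductive teq : seq (SA * SB) -> seq (SA * SB) -> Prop :=
  | teq_refl s : teq s s
  | teq_sym s t : teq s t -> teq t s
  | teq_trans s t u : teq s t -> teq t u -> teq s u
  | teq_set s t : {subset s <= t} -> {subset t <= s} -> teq s t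
  | teq_cat s s' t : teq s s' -> teq (s ++ t) (s' ++ t)
  | teq_linA (a a' : SA) (b : SB) : teq [:: (a `&` a', b)] [:: (a, b); (a', b)]
  | teq_linB (a : SA) (b b' : SB) : teq [:: (a, b `&` b')] [:: (a, b); (a, b')].

Definition tle (x y : seq (SA * SB)) : Prop := teq (x ++ y) x.

Variables (CA : ChuSpace SA) (CB : ChuSpace SB).

Definition tpure (p : SA * SB) : effects CA -> effects CB -> B3 :=
  fun la lb => bprod (eval la p.1) (eval lb p.2).

Definition tinf (s : seq (SA * SB)) : effects CA -> effects CB -> B3 :=
  match s with
  | [::] => fun _ _ => BY (* never used: families are nonempty *)
  | p :: s' => fun la lb => foldr (fun q acc => bmeet (tpure q la lb) acc)
                                  (tpure p la lb) s'
  end.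

Definition tile (f g : effects CA -> effects CB -> B3) : Prop :=
  forall la lb, ble (f la lb) (g la lb).

End Fraser.

From HB Require Import structures.
From mathcomp Require Import all_boot all_order.

Set Implicit Arguments.
Unset Strict Implicit.
Unset Printing Implicit Defensive.

(* Evaluating a formal infimum at a pair of effects (la, lb) sends every pure
   tensor a (x) b to eps_la(a) * eps_lb(b) and formal meets to meets in B3.
   Since B3 is a semilattice and the evaluations are meet-morphisms over which
   the product distributes, this evaluation respects Fraser's congruence, so
   the order of S_AB is carried to the pointwise order of the minimal tensor
   product. *)

Lemma bmeetC : commutative bmeet.
Proof. by do 2 case. Qed.

Lemma bmeetA : associative bmeet.
Proof. by do 3 case. Qed.

Lemma bmeetxx : idempotent_op bmeet.
Proof. by case. Qed.

Lemma bprod_meetl x x' y : bprod (bmeet x x') y = bmeet (bprod x y) (bprod x' y).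
Proof. by case: x; case: x'; case: y. Qed.

Lemma bprod_meetr x y y' : bprod x (bmeet y y') = bmeet (bprod x y) (bprod x y').
Proof. by case: x; case: y; case: y'. Qed.

(* B3 with a top element [None] adjoined, so that the empty meet is defined. *)
Definition omeet (x y : option B3) : option B3 :=
  match x, y with
  | None, _ => y
  | _, None => x
  | Some a, Some b => Some (bmeet a b)
  end.

Lemma omeetC : commutative omeet.
Proof. by case=> [a|] [b|] //=; rewrite bmeetC. Qed.

Lemma omeetA : associative omeet.
Proof. by case=> [a|] [b|] [c|] //=; rewrite bmeetA. Qed.

Lemma omeet1o : left_id None omeet.
Proof. by []. Qed.

Lemma omeetxx : idempotent_op omeet.
Proof. by case=> [a|] //=; rewrite bmeetxx. Qed.

HB.instance Definition _ := Monoid.isComLaw.Build (option B3) None omeet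
  omeetA omeetC omeet1o.

Lemma Some_foldr_bmeet (T : Type) (g : T -> B3) x (s : seq T) :
  Some (foldr (fun q acc => bmeet (g q) acc) x s)
  = omeet (Some x) (\big[omeet/None]_(q <- s) Some (g q)).
Proof.
elim: s => [|q s IHs]; first by rewrite big_nil.
by rewrite big_cons /= -[Some (bmeet _ _)]/(omeet (Some (g q)) (Some _)) IHs
  Monoid.mulmCA.
Qed.

Section Evaluation.
Variables (dA dB : Order.disp_t) (SA : bMeetSemilatticeType dA)
          (SB : bMeetSemilatticeType dB) (CA : ChuSpace SA) (CB : ChuSpace SB).
Variables (la : effects CA) (lb : effects CB).

Definition teval (s : seq (SA * SB)) : option B3 :=
  \big[omeet/None]_(p <- s) Some (tpure p la lb).

Lemma teval_cat s t : teval (s ++ t) = omeet (teval s) (teval t).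
Proof. exact: big_cat. Qed.

Lemma teval_pure_meet (p q r : SA * SB) :
  tpure p la lb = bmeet (tpure q la lb) (tpure r la lb) ->
  teval [:: p] = teval [:: q; r].
Proof. by rewrite /teval !big_cons !big_nil /= => ->. Qed.

Lemma teval_teq s t : teq s t -> teval s = teval t.
Proof.
elim=> {s t} // [s t u _ -> _ -> //|s t st ts|s s' t _ e|a a' b|a b b'].
- apply: eq_big_idem; first exact: omeetxx.
  by move=> p; apply/idP/idP; [apply: st | apply: ts].
- by rewrite !teval_cat e.
- by apply: teval_pure_meet; rewrite /tpure /= eval_meet bprod_meetl.
- by apply: teval_pure_meet; rewrite /tpure /= eval_meet bprod_meetr.
Qed.

Lemma teval_tinf p s : teval (p :: s) = Some (tinf (p :: s) la lb).
Proof. by rewrite /teval big_cons Some_foldr_bmeet omeetC. Qed.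

Lemma tle_teval s t : tle s t -> omeet (teval s) (teval t) = teval s.
Proof. by move=> /teval_teq; rewrite teval_cat. Qed.

End Evaluation.

Theorem mainTheorem10
  (dA dB : Order.disp_t) (SA : bMeetSemilatticeType dA) (SB : bMeetSemilatticeType dB)
  (hA : down_complete SA) (hB : down_complete SB)
  (CA : ChuSpace SA) (CB : ChuSpace SB)
  (I : finType) (hI : 0 < #|I|) (sA : I -> SA) (sB : I -> SB)
  (sA' : SA) (sB' : SB) :
  tle [seq (sA i, sB i) | i <- enum I] [:: (sA', sB')] ->
  tile (@tinf _ _ _ _ CA CB [seq (sA i, sB i) | i <- enum I]) (@tpure _ _ _ _ CA CB (sA', sB')).
Proof.
move=> le_s la lb; have := tle_teval la lb le_s.
case: [seq _ | _ <- _] => [|p s]; first by rewrite /teval big_nil big_cons big_nil.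
by rewrite teval_tinf /teval big_cons big_nil /= => -[].
Qed.
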